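(* Let $p \in (0,\frac{1}{2})$ be a constant. No (possibly randomized) sorting algorithm can achieve, on a random instance with $n$ elements, an expected total dislocation of $o(n)$.
   Context: Setting: the elements are $S=\{1,\dots,n\}$ with the natural order. A random instance consists of an input permutation of $S$ chosen uniformly at random together with comparison outcomes: for each pair $i<j$ independently, the comparison reports the wrong order with probability exactly $p$ and the correct order otherwise; outcomes are persistent (repeated comparisons of the same pair return the same outcome). The algorithm accesses elements only via these comparisons and outputs a permutation of $S$. The dislocation of an element is the absolute difference between its position in the output and its true rank; the total dislocation is the sum over all elements. *)

From HB Require Import structures.
From mathcomp Require Import all_boot all_order all_algebra all_fingroup.
From mathcomp Require Import reals.
Set Implicit Arguments. Unset Strict Implicit. Unset Printing Implicit Defensive.
Import Order.TTheory GRing.Theory Num.Theory.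
Local Open Scope ring_scope.

(* Elements are 'I_n = {0,...,n-1} with the natural order (the paper's
   {1,...,n} shifted by one; dislocations are unaffected). *)

(* Pairs (i,j) of elements with i < j: one comparison coin per such pair. *)
Definition pairs (n : nat) : {set 'I_n * 'I_n} :=
  [set x : 'I_n * 'I_n | (x.1 < x.2)%N].

(* Outcome "a is reported smaller than b" when F (a subset of [pairs n]) is the
   set of pairs whose comparison is reported in the wrong order.  Persistent:
   the outcome is a fixed function of the pair. *)
Definition reported_less (n : nat) (F : {set 'I_n * 'I_n}) (a b : 'I_n) : bool :=
  if (a < b)%N then (a, b) \notin F
  else if (b < a)%N then (b, a) \in F
  else false.

(* The input permutation sigma puts element [sigma k] at input position k.
   An algorithm only sees positions; the information available to it through
   comparisons is the reported order relation between positions. *)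
Definition observation (n : nat) (sigma : 'S_n) (F : {set 'I_n * 'I_n})
  : {ffun 'I_n * 'I_n -> bool} :=
  [ffun x : 'I_n * 'I_n => reported_less F (sigma x.1) (sigma x.2)].

(* Output tau : output rank k holds the element at input position tau k, i.e.
   element sigma (tau k).  Its dislocation is |k - sigma (tau k)|. *)
Definition total_dislocation (R : numDomainType) (n : nat) (sigma tau : 'S_n) : R :=
  \sum_(k < n) `| (k : nat)%:R - (sigma (tau k) : nat)%:R |.

(* A (possibly randomized) comparison-based sorting algorithm on n elements:
   given everything it can learn by comparisons (it may query every pair, as
   there is no query cost), it outputs a permutation according to a probability
   distribution (its internal randomness). *)
Definition randomized_algorithm (R : numDomainType) (n : nat) :=
  {ffun 'I_n * 'I_n -> bool} -> {ffun 'S_n -> R}.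

Definition valid_algorithm (R : numDomainType) (n : nat)
  (A : randomized_algorithm R n) : Prop :=
  forall o : {ffun 'I_n * 'I_n -> bool},
    (forall tau, 0 <= A o tau) /\ \sum_(tau : 'S_n) A o tau = 1.

Definition expected_dislocation (R : numDomainType) (p : R) (n : nat)
  (A : randomized_algorithm R n) : R :=
  \sum_(sigma : 'S_n) \sum_(F : {set 'I_n * 'I_n} | F \subset pairs n)
    ((n`!)%:R)^-1 * (p ^+ #|F| * (1 - p) ^+ (#|pairs n| - #|F|)) *
    \sum_(tau : 'S_n) A (observation sigma F) tau * total_dislocation R sigma tau.

From HB Require Import structures.
From mathcomp Require Import all_boot all_order all_algebra all_fingroup.
From mathcomp Require Import reals zify ring lra.
Set Implicit Arguments. Unset Strict Implicit. Unset Printing Implicit Defensive.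
Import Order.TTheory GRing.Theory Num.Theory.
Local Open Scope ring_scope.

(* Take two elements v, v+1 of adjacent rank.  Swapping them in the input and
   toggling the coin of their comparison (moving the other coins along) gives an
   instance with exactly the same comparison outcomes, so the algorithm's output
   distribution is the same on both; as p < 1/2 the new instance is at least p
   times as likely as the original.  Element v is output where v+1 was output
   before, so in one of the two instances v is dislocated by at least 1.  Hence
   every one of the n-1 adjacent pairs contributes at least p/2 to the expected
   total dislocation, which is therefore at least p(n-1)/2. *)

Section NoiseWeight.
Variables (R : comPzRingType) (T : finType) (p : R).

Definition noise_weight (P F : {set T}) : R :=
  p ^+ #|F| * (1 - p) ^+ (#|P| - #|F|).

Lemma sum_noise_weight (P : {set T}) :
  \sum_(F : {set T} | F \subset P) noise_weight P F = 1.
Proof.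
pose f x := if x \in P then p else 0.
pose g x := if x \in P then 1 - p else 1.
have := @bigA_distr R 0 1 *%R +%R _ f g.
rewrite big1 => [->|x _]; last by rewrite /f /g /=; case: ifP; rewrite ?subrKC ?add0r.
rewrite big_mkcond; apply: eq_big => // F _.
have [FP|/subsetPn[x xF xNP]] := boolP (F \subset P); last first.
  by rewrite (bigD1 x) //= xF /f (negbTE xNP) mul0r.
rewrite (eq_bigr (fun x => (if x \in F then p else 1) *
                           (if x \in P :\: F then 1 - p else 1))); last first.
  move=> x _; rewrite /f /g in_setD.
  by have [xF|] := boolP (x \in F); [rewrite (subsetP FP) ?mulr1 | rewrite mul1r].
by rewrite big_split -!big_mkcond !prodr_const cardsD (setIidPr FP).
Qed.

Lemma noise_weightD1 (P F : {set T}) x : x \in P -> F \subset P ->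
  noise_weight P F =
  noise_weight (P :\ x) (F :\ x) * (if x \in F then p else 1 - p).
Proof.
move=> xP FP; rewrite /noise_weight (cardsD1 x F) (cardsD1 x P) xP.
have : (#|F :\ x| <= #|P :\ x|)%N by apply/subset_leq_card/setSD.
case: (x \in F) => /= le_FP.
  by rewrite subnDl add1n exprS; ring.
by rewrite add0n add1n subSn // exprS; ring.
Qed.

End NoiseWeight.

Lemma noise_weight_ge0 (R : numDomainType) (T : finType) (p : R) (P F : {set T}) :
  0 <= p <= 1 -> 0 <= noise_weight p P F.
Proof. by case/andP=> p_ge0 p_le1; rewrite mulr_ge0 ?exprn_ge0 ?subr_ge0. Qed.

Lemma noise_weight_toggle (R : realDomainType) (T : finType) (p : R)
    (P F G : {set T}) x :
  0 <= p -> p <= 1 - p -> x \in P -> F \subset P -> G \subset P ->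
  #|G :\ x| = #|F :\ x| -> (x \in G) = (x \notin F) ->
  p * noise_weight p P F <= noise_weight p P G.
Proof.
move=> p_ge0 p_le xP FP GP cardGF xGF.
rewrite (noise_weightD1 _ xP FP) (noise_weightD1 _ xP GP) xGF.
have -> : noise_weight p (P :\ x) (G :\ x) = noise_weight p (P :\ x) (F :\ x)
  by rewrite /noise_weight cardGF.
have : 0 <= noise_weight p (P :\ x) (F :\ x) by apply: noise_weight_ge0; lra.
move: (noise_weight _ _ _) => B B_ge0.
have pp_le : p * p <= 1 - p by nra.
by case: (x \in F) => /=; nra.
Qed.

Lemma tperm_eqL (T : finType) (x y w : T) : (tperm x y w == y) = (w == x).
Proof. by rewrite -[X in _ == X](tpermL x y) (inj_eq perm_inj). Qed.

Lemma tperm_eqR (T : finType) (x y w : T) : (tperm x y w == x) = (w == y).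
Proof. by rewrite -[X in _ == X](tpermR x y) (inj_eq perm_inj). Qed.

Section AdjacentSwap.
Variables (n : nat) (i j : 'I_n).
Hypothesis j_succ : (j : nat) = i.+1.
Local Notation t := (tperm i j).

Lemma tperm_adj_val u :
  (t u : nat) = if u == i then j else if u == j then i else u.
Proof.
have ji : (j == i) = false by rewrite -val_eqE /= j_succ gtn_eqF.
by case: tpermP => [->|->|/eqP/negbTE-> /eqP/negbTE->]; rewrite ?eqxx ?ji.
Qed.

Lemma tperm_adj_ltE (u v : 'I_n) :
  ~~ ((u == i) && (v == j)) -> ~~ ((u == j) && (v == i)) ->
  (t u < t v)%N = (u < v)%N.
Proof.
rewrite !tperm_adj_val -!val_eqE /=.
by do 4?case: eqP => /=; lia.
Qed.

(* [swap_noise F] is the noise set under which the instance [s * t] reports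
   every comparison exactly as [s] does under [F]: the coin of (i, j) is
   toggled and every other coin is moved along [t]. *)
Definition relabel (x : 'I_n * 'I_n) : 'I_n * 'I_n :=
  if (x == (i, j)) || (x == (j, i)) then x else (t x.1, t x.2).

Definition swap_noise (F : {set 'I_n * 'I_n}) : {set 'I_n * 'I_n} :=
  [set x | (relabel x \in F) (+) (x == (i, j))].

Lemma relabel_tperm u v : ~~ ((u == i) && (v == j)) -> ~~ ((u == j) && (v == i)) ->
  relabel (t u, t v) = (u, v).
Proof.
rewrite /relabel !xpair_eqE /= !tperm_eqL !tperm_eqR => /negbTE-> /negbTE->.
by rewrite !tpermK.
Qed.

Lemma relabelK : involutive relabel.
Proof.
case=> u v; rewrite {2}/relabel; case: ifP => [uv_adj|/norP[uv_ij uv_ji]].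
  by rewrite /relabel uv_adj.
by rewrite !xpair_eqE in uv_ij uv_ji; apply: relabel_tperm.
Qed.

Lemma relabel_eq_adj x : (relabel x == (i, j)) = (x == (i, j)).
Proof.
case: x => u v; rewrite /relabel; case: ifP => // /norP[uv_ij uv_ji].
rewrite !xpair_eqE /= !tperm_eqL !tperm_eqR in uv_ij uv_ji *.
by rewrite (negbTE uv_ij) (negbTE uv_ji).
Qed.

Lemma relabel_pairs x : (relabel x \in pairs n) = (x \in pairs n).
Proof.
case: x => u v; rewrite /relabel; case: ifP => // /norP[].
by rewrite !inE !xpair_eqE /= => uv_ij uv_ji; rewrite tperm_adj_ltE.
Qed.

Lemma swap_noiseK : involutive swap_noise.
Proof.
move=> F; apply/setP => x; rewrite !inE relabelK relabel_eq_adj.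
by case: (x == (i, j)); rewrite ?addbT ?negbK ?addbF.
Qed.

Lemma adj_in_swap_noise F : ((i, j) \in swap_noise F) = ((i, j) \notin F).
Proof. by rewrite inE eqxx /relabel eqxx addbT. Qed.

Lemma swap_noise_sub_pairs F : (swap_noise F \subset pairs n) = (F \subset pairs n).
Proof.
suff sub_pairs (G : {set 'I_n * 'I_n}) : G \subset pairs n -> swap_noise G \subset pairs n.
  by apply/idP/idP => /sub_pairs //; rewrite swap_noiseK.
move=> /subsetP G_pairs; apply/subsetP => x; rewrite inE.
have [-> _|_] := eqVneq x (i, j); first by rewrite inE /= j_succ.
by rewrite addbF -relabel_pairs => /G_pairs.
Qed.

Lemma card_swap_noiseD1 F : #|swap_noise F :\ (i, j)| = #|F :\ (i, j)|.
Proof.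
have -> : swap_noise F :\ (i, j) = relabel @^-1: (F :\ (i, j)).
  apply/setP => x; rewrite !inE relabel_eq_adj.
  by case: (x == (i, j)); rewrite ?addbF.
by rewrite card_preimset //; apply: (can_inj relabelK).
Qed.

Lemma reported_less_swap F u v :
  reported_less (swap_noise F) (t u) (t v) = reported_less F u v.
Proof.
have [/andP[/eqP-> /eqP->]|uv_ij] := boolP ((u == i) && (v == j)).
  by rewrite tpermL tpermR /reported_less j_succ ltnSn ltnNge leqnSn adj_in_swap_noise.
have [/andP[/eqP-> /eqP->]|uv_ji] := boolP ((u == j) && (v == i)).
  by rewrite tpermL tpermR /reported_less j_succ ltnSn ltnNge leqnSn adj_in_swap_noise negbK.
have vu_ij : ~~ ((v == i) && (u == j)) by rewrite andbC.
have vu_ji : ~~ ((v == j) && (u == i)) by rewrite andbC.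
rewrite /reported_less !tperm_adj_ltE // !inE !relabel_tperm //.
by rewrite !xpair_eqE !tperm_eqR !tperm_eqL (negbTE uv_ji) (negbTE vu_ji) !addbF.
Qed.

Lemma observation_swap s F : observation (s * t) (swap_noise F) = observation s F.
Proof. by apply/ffunP => x; rewrite !ffunE !permM reported_less_swap. Qed.

End AdjacentSwap.

Lemma ler1_dist_nat (R : numDomainType) (a b : nat) : a != b -> 1 <= `|a%:R - b%:R : R|.
Proof.
case: ltngtP => // lt_ab _; first rewrite distrC.
all: by rewrite -natrB 1?ltnW // normr_nat ler1n subn_gt0.
Qed.

(* Output position k holds element [s (tau k)], so element [v] is output at
   position [(tau * s)^-1 v]. *)
Definition elt_dislocation (R : numDomainType) n (v : 'I_n) (s tau : 'S_n) : R :=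
  `| (((tau * s)^-1)%g v : nat)%:R - (v : nat)%:R |.

Lemma total_dislocationE (R : numDomainType) n (s tau : 'S_n) :
  total_dislocation R s tau = \sum_(v < n) elt_dislocation R v s tau.
Proof.
rewrite /total_dislocation (reindex_inj (@perm_inj _ ((tau * s)^-1)%g)) /=.
by apply: eq_bigr => v _; rewrite /elt_dislocation -permM permKV.
Qed.

Lemma elt_dislocation_tperm (R : numDomainType) n (v w : 'I_n) (s tau : 'S_n) :
  v != w -> 1 <= elt_dislocation R v s tau + elt_dislocation R v (s * tperm v w) tau.
Proof.
move=> vw; rewrite /elt_dislocation.
have -> : ((tau * (s * tperm v w))^-1)%g v = ((tau * s)^-1)%g w.
  by rewrite mulgA invMg permM tpermV tpermL.
set a := ((tau * s)^-1)%g v; set b := ((tau * s)^-1)%g w.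
have [av|/(ler1_dist_nat R) a_far] := eqVneq (a : nat) v; last first.
  by apply: le_trans a_far _; rewrite lerDl normr_ge0.
have bv : (b : nat) != v by rewrite -av val_eqE (inj_eq perm_inj) eq_sym.
by rewrite av subrr normr0 add0r ler1_dist_nat.
Qed.

Definition expected_elt_dislocation (R : numDomainType) (p : R) n
    (A : randomized_algorithm R n) (v : 'I_n) : R :=
  \sum_(s : 'S_n) \sum_(F : {set 'I_n * 'I_n} | F \subset pairs n)
    (n`!%:R)^-1 * noise_weight p (pairs n) F *
    \sum_(tau : 'S_n) A (observation s F) tau * elt_dislocation R v s tau.

Lemma expected_dislocationE (R : numDomainType) (p : R) n (A : randomized_algorithm R n) :
  expected_dislocation p A = \sum_(v < n) expected_elt_dislocation p A v.
Proof.
rewrite /expected_dislocation /expected_elt_dislocation [RHS]exchange_big /=.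
apply: eq_bigr => s _; rewrite [RHS]exchange_big /=; apply: eq_bigr => F _.
rewrite -big_distrr [in RHS]exchange_big /=; congr (_ * _); apply: eq_bigr => tau _.
by rewrite total_dislocationE big_distrr.
Qed.

Lemma expected_elt_dislocation_ge0 (R : numDomainType) (p : R) n
    (A : randomized_algorithm R n) v :
  valid_algorithm A -> 0 <= p <= 1 -> 0 <= expected_elt_dislocation p A v.
Proof.
move=> A_valid p01; rewrite /expected_elt_dislocation.
apply: sumr_ge0 => s _; apply: sumr_ge0 => F _.
apply: mulr_ge0; first by rewrite mulr_ge0 ?invr_ge0 ?noise_weight_ge0.
apply: sumr_ge0 => tau _; rewrite mulr_ge0 ?normr_ge0 //.
by case: (A_valid (observation s F)).
Qed.

Lemma expected_elt_dislocation_swap (R : numDomainType) (p : R) n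
    (A : randomized_algorithm R n) (v w : 'I_n) :
  (w : nat) = v.+1 ->
  expected_elt_dislocation p A v =
  \sum_(s : 'S_n) \sum_(F : {set 'I_n * 'I_n} | F \subset pairs n)
    (n`!%:R)^-1 * noise_weight p (pairs n) (swap_noise v w F) *
    \sum_(tau : 'S_n) A (observation s F) tau * elt_dislocation R v (s * tperm v w) tau.
Proof.
move=> w_succ; rewrite /expected_elt_dislocation (reindex_inj (mulIg (tperm v w))) /=.
apply: eq_bigr => s _; rewrite (reindex_inj (can_inj (swap_noiseK v w))) /=.
by apply: eq_big => [F|F _]; rewrite ?swap_noise_sub_pairs ?observation_swap.
Qed.

Lemma expected_elt_dislocation_lb (R : realFieldType) (p : R) n
    (A : randomized_algorithm R n) (v w : 'I_n) :
  valid_algorithm A -> 0 <= p -> p <= 1 - p -> (w : nat) = v.+1 ->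
  p <= expected_elt_dislocation p A v *+ 2.
Proof.
move=> A_valid p_ge0 p_le w_succ.
set c : R := (n`!%:R)^-1; have c_ge0 : 0 <= c by rewrite invr_ge0.
have total_p : \sum_(s : 'S_n) \sum_(F : {set 'I_n * 'I_n} | F \subset pairs n)
                  c * p * noise_weight p (pairs n) F = p.
  under eq_bigr do rewrite -big_distrr /= sum_noise_weight mulr1.
  by rewrite sumr_const card_Sn -mulr_natr mulrAC mulVf ?mul1r // pnatr_eq0 -lt0n fact_gt0.
rewrite -[X in X <= _]total_p.
rewrite mulr2n {2}(expected_elt_dislocation_swap _ _ w_succ).
rewrite /expected_elt_dislocation -big_split; apply: ler_sum => s _.
rewrite -big_split; apply: ler_sum => F FP /=.
set W := noise_weight p _ F; set W' := noise_weight p _ (swap_noise v w F).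
set X := \sum_tau _ * elt_dislocation R v s tau.
set X' := \sum_tau _ * elt_dislocation R v (s * tperm v w) tau.
have [A_ge0 A_sum1] := A_valid (observation s F).
have X_ge0 : 0 <= X by apply: sumr_ge0 => tau _; rewrite mulr_ge0 ?normr_ge0.
have X'_ge0 : 0 <= X' by apply: sumr_ge0 => tau _; rewrite mulr_ge0 ?normr_ge0.
have X_X'_ge1 : 1 <= X + X'.
  rewrite -big_split -A_sum1; apply: ler_sum => tau _ /=.
  have v_neq_w : v != w by apply/eqP => /(congr1 val) /=; lia.
  by rewrite -mulrDr ler_peMr ?elt_dislocation_tperm.
have W_ge0 : 0 <= W by apply: noise_weight_ge0; lra.
have W'_ge : p * W <= W'.
  apply: (noise_weight_toggle (x := (v, w))) => //.
  - by rewrite inE /= w_succ.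
  - by rewrite swap_noise_sub_pairs.
  - exact: card_swap_noiseD1.
  exact: adj_in_swap_noise.
clearbody W W' X X'; rewrite -/c.
have pW_le_W : p * W <= W by rewrite ler_piMl //; lra.
have : 0 <= c * (p * W * (X + X' - 1)) by rewrite !mulr_ge0 ?subr_ge0.
have : 0 <= c * ((W - p * W) * X) by rewrite !mulr_ge0 ?subr_ge0.
have : 0 <= c * ((W' - p * W) * X') by rewrite !mulr_ge0 ?subr_ge0.
nra.
Qed.

Lemma expected_dislocation_lb (R : realFieldType) (p : R) n
    (A : randomized_algorithm R n.+1) :
  valid_algorithm A -> 0 <= p -> p <= 1 - p ->
  p *+ n <= expected_dislocation p A *+ 2.
Proof.
move=> A_valid p_ge0 p_le; rewrite expected_dislocationE -sumrMnl big_ord_recr /=.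
rewrite -[p *+ n]addr0 -[n in p *+ n]card_ord -sumr_const.
apply: lerD; last by rewrite mulrn_wge0 ?expected_elt_dislocation_ge0 ?p_ge0 //; lra.
apply: ler_sum => v _.
exact: (expected_elt_dislocation_lb (w := @Ordinal n.+1 v.+1 (ltn_ord v))).
Qed.

Theorem theorem6p3 (R : realType) (p : R) (hp0 : 0 < p) (hp1 : p < 2^-1)
  (A : forall n : nat, randomized_algorithm R n)
  (hA : forall n : nat, valid_algorithm (A n)) :
  ~ (forall eps : R, 0 < eps ->
       exists N : nat, forall n : nat, (N <= n)%N ->
         expected_dislocation p (A n) <= eps * n%:R).
Proof.
move=> sublinear.
have p_le : p <= 1 - p by lra.
have [|N small] := sublinear (p / 4); first by rewrite divr_gt0.
have := small N.+3 (leq_addl 3 N).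
have := expected_dislocation_lb (hA N.+3) (ltW hp0) p_le.
move: (expected_dislocation _ _) => E.
rewrite mulr2n -[p *+ _]mulr_natr -[N.+3]addn3 -[N.+2]addn2 !natrD.
have : 0 <= p * N%:R by rewrite mulr_ge0 // ltW.
move: (N%:R : R) => M.
nra.
Qed.
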